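(* Let $T$ be an $n$-taxon tree and $\widetilde\phi_T:\mathbb C^N\to\mathbb C^{\kappa^n}$ a polynomial parameterization map of a phylogenetic model $\mathcal M$ on $T$, with homogeneous phylogenetic ideal $\widetilde J_T$. Let $\phi_T:\mathbb C^N\times\mathbb C^\kappa\to\mathbb C^{\kappa^n}$ be the parameterization of the $\mathcal M$+I model, $$\phi_T(\mathbf s,(\delta,\pi_I))=(1-\delta)\widetilde\phi_T(\mathbf s)+\delta\,\mathrm{diag}(\pi_I),$$ with homogeneous phylogenetic ideal $J_T$. Let $P_{eq}=\{p_{ii\dots i}: i\in\{1,\dots,\kappa\}\}$ and let $P'$ be the set of all other indeterminates $p_{i_1\dots i_n}$. Then $$J_T=\left(\widetilde J_T\cap\mathbb C[P']\right)\mathbb C[P],$$ i.e. $J_T$ is generated by the elements of $\widetilde J_T$ not involving the variables in $P_{eq}$.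
   Context: $\mathbb C[P]$ is the polynomial ring in the $\kappa^n$ indeterminates $p_{i_1\dots i_n}$, $i_k\in\{1,\dots,\kappa\}$, and $\mathbb C[P']$ is its subring in the indeterminates of $P'$. Here $(\delta,\pi_I)\in\mathbb C\times\mathbb C^{\kappa-1}$ are the remaining coordinates of $\mathbb C^\kappa$ (the class size $\delta$ and the invariable-site state distribution $\pi_I$, a vector in $\mathbb C^\kappa$ whose entries sum to 1), and $\mathrm{diag}(\pi_I)$ is the $\kappa\times\dots\times\kappa$ array with entry $\pi_I(i)$ at position $(i,\dots,i)$ and zeros elsewhere. For a polynomial parameterization $\psi$ with values in $\mathbb C^{\kappa^n}$, its (affine) phylogenetic ideal is the ideal of all polynomials in $\mathbb C[P]$ vanishing on the image of $\psi$, and its homogeneous phylogenetic ideal is the ideal generated by the homogeneous polynomials in that ideal; equivalently, the ideal of polynomials vanishing on the cone $\{t\,\psi(\mathbf x): t\in\mathbb C\}$ over the image. *)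

From HB Require Import structures.
From mathcomp Require Import all_boot all_algebra.
From mathcomp Require Import complex.
From mathcomp Require Import Rstruct.
From mathcomp Require Import mpoly.

Set Implicit Arguments.
Unset Strict Implicit.
Unset Printing Implicit Defensive.

Import GRing.Theory.
Local Open Scope ring_scope.

Definition CC : numClosedFieldType := complex Rdefinitions.R.

Definition Idx (n kappa : nat) : finType := {ffun 'I_n -> 'I_kappa}.

Definition nvar (n kappa : nat) : nat := #|Idx n kappa|.

(* C[P] : polynomial ring in the indeterminates p_x, x in Idx n kappa;
   the indeterminate p_x is 'X_(enum_rank x). *)
Definition CP (n kappa : nat) := {mpoly CC[nvar n kappa]}.

Definition evalP (n kappa : nat) (p : CP n kappa) (v : Idx n kappa -> CC) : CC :=
  p.@[fun j => v (enum_val j)].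

Definition diag_idx (n kappa : nat) (i : 'I_kappa) : Idx n kappa := [ffun=> i].

Definition in_CP' (n kappa : nat) (p : CP n kappa) : Prop :=
  forall m, m \in msupp p -> forall i : 'I_kappa, m (enum_rank (diag_idx n i)) = 0%N.

Definition vanishing_ideal (n kappa : nat) (D : Type) (psi : D -> Idx n kappa -> CC)
  : CP n kappa -> Prop :=
  fun p => forall x : D, evalP p (psi x) = 0.

Definition gen_ideal (n kappa : nat) (S : CP n kappa -> Prop) : CP n kappa -> Prop :=
  fun p => exists s : seq (CP n kappa * CP n kappa),
    (forall q, q \in s -> S q.2) /\ p = \sum_(q <- s) q.1 * q.2.

Definition hom_phylo_ideal (n kappa : nat) (D : Type) (psi : D -> Idx n kappa -> CC)
  : CP n kappa -> Prop :=
  gen_ideal (fun p => (exists d : nat, p \is d.-homog) /\ vanishing_ideal psi p).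

Definition poly_param (n kappa N : nat) (f : Idx n kappa -> {mpoly CC[N]})
  : ('I_N -> CC) -> Idx n kappa -> CC :=
  fun s x => (f x).@[s].

Definition diag_array (n kappa : nat) (pi : 'I_kappa -> CC) : Idx n kappa -> CC :=
  fun x => \sum_(i < kappa) (if x == diag_idx n i then pi i else 0).

Definition InvParam (kappa : nat) : Type :=
  { dp : CC * ('I_kappa -> CC) | \sum_(i < kappa) dp.2 i = 1 }.

Definition plusI_param (n kappa N : nat) (phit : ('I_N -> CC) -> Idx n kappa -> CC)
  : ('I_N -> CC) * InvParam kappa -> Idx n kappa -> CC :=
  fun sd x => let s := sd.1 in let delta := (sval sd.2).1 in let pi := (sval sd.2).2 in
    (1 - delta) * phit s x + delta * diag_array pi x.

(* The inclusion from right to left: the off-diagonal coordinates of phi are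
   (1 - delta) times those of phi~, so each homogeneous component of an element
   of J~ not involving P_eq, which vanishes on the cone over the image of phi~,
   also vanishes on the image of phi.
   The inclusion from left to right: write a homogeneous g vanishing on the image
   of phi as sum_b X^b c_b, with X^b a monomial in P_eq and c_b in C[P']. Fix s
   and x := phi~(s). A point v whose off-diagonal coordinates are those of x and
   such that A := sum_i (v_(i..i) - x_(i..i)) is neither 0 nor -1 equals
   (1 + A) phi(s, A / (1 + A), pi) with pi_i := (v_(i..i) - x_(i..i)) / A. Hence
   g(v), a polynomial in the diagonal coordinates with coefficients c_b(x),
   vanishes off the hypersurface A (1 + A) = 0, so it is zero: every c_b
   vanishes on the image of phi~ and, being homogeneous, lies in J~. *)

From HB Require Import structures.
From mathcomp Require Import all_boot all_algebra.
From mathcomp Require Import complex Rstruct mpoly.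
From mathcomp Require Import ring.
Set Implicit Arguments.
Unset Strict Implicit.
Unset Printing Implicit Defensive.

Import GRing.Theory Num.Theory.

Lemma sum_digits_lt (a : nat -> nat) (D k : nat) : (forall i, a i < D) ->
  (\sum_(i < k) a i * D ^ i < D ^ k).
Proof.
move=> a_lt; elim: k => [|k IHk]; first by rewrite big_ord0 expn0.
rewrite big_ord_recr /= expnS (@leq_trans (D ^ k + a k * D ^ k)) ?ltn_add2r //.
by rewrite -mulSn leq_mul2r a_lt orbT.
Qed.

Lemma sum_digits_inj (a b : nat -> nat) (D k : nat) :
  (forall i, a i < D) -> (forall i, b i < D) ->
  (\sum_(i < k) a i * D ^ i = \sum_(i < k) b i * D ^ i) ->
  forall i, (i < k) -> a i = b i.
Proof.
move=> a_lt b_lt; elim: k => [//|k IHk]; rewrite !big_ord_recr /= => eq_ab.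
have Dk_gt0 : (0 < D ^ k) by rewrite expn_gt0 (leq_ltn_trans _ (a_lt 0)).
have lowa := sum_digits_lt k a_lt; have lowb := sum_digits_lt k b_lt.
have eq_k : a k = b k.
  have := congr1 (divn^~ (D ^ k)) eq_ab.
  by rewrite ![(_ + a k * _)]addnC ![(_ + b k * _)]addnC !divnMDl // !divn_small // !addn0.
have eq_low : (\sum_(i < k) a i * D ^ i = \sum_(i < k) b i * D ^ i).
  have := congr1 (modn^~ (D ^ k)) eq_ab.
  by rewrite ![(_ + a k * _)]addnC ![(_ + b k * _)]addnC !modnMDl !modn_small.
by move=> i; rewrite ltnS leq_eqVlt => /predU1P[->|/(IHk eq_low)].
Qed.

Local Open Scope ring_scope.

Lemma poly_eq0_of_horner (R : numDomainType) (p : {poly R}) :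
  (forall t, p.[t] = 0) -> p = 0.
Proof.
move=> p0; apply/eqP; apply: contraT => p_neq0.
have := max_poly_roots (rs := [seq i%:R | i <- iota 0 (size p)]) p_neq0.
rewrite size_map size_iota ltnn; apply.
- by apply/allP => _ /mapP[i _ ->]; apply/rootP.
- by rewrite map_inj_uniq ?iota_uniq // => i j /eqP; rewrite eqr_nat => /eqP.
Qed.

Lemma meval_dhomog_scale (R : comNzRingType) (k d : nat) (p : {mpoly R[k]}) :
  p \is d.-homog ->
  forall (t : R) (v : 'I_k -> R), p.@[fun j => t * v j] = t ^+ d * p.@[v].
Proof.
move=> /dhomogP p_homog t v; rewrite !mevalE mulr_sumr; apply: eq_big_seq => m m_supp.
under eq_bigr do rewrite exprMn.
by rewrite big_split /= prodrXr -mdegE p_homog // mulrCA.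
Qed.

(* Kronecker substitution [X_i |-> t ^+ (D ^ i)]: it separates the monomials
   of [p] because all their exponents are below [D]. *)
Lemma mpoly_eq0_of_meval (R : numDomainType) (k : nat) (p : {mpoly R[k]}) :
  (forall v, p.@[v] = 0) -> p = 0.
Proof.
move=> p0; pose D := msize p.
pose digit (m : 'X_{1..k}) i := nth 0%N m i.
have digitE (m : 'X_{1..k}) (i : 'I_k) : m i = digit m i by rewrite mnm_tnth (tnth_nth 0%N).
pose enc m := (\sum_(i < k) digit m i * D ^ i)%N.
have digit_lt m : m \in msupp p -> forall i, (digit m i < D)%N.
  move=> /msize_mdeg_lt deg_lt j; case: (ltnP j k) => [jk|kj].
    rewrite -[j]/(val (Ordinal jk)) -digitE (leq_ltn_trans _ deg_lt) //.
    by rewrite mdegE (bigD1 (Ordinal jk)) //= leq_addr.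
  by rewrite /digit nth_default ?size_tuple // (leq_ltn_trans _ deg_lt).
have enc_inj : {in msupp p &, injective enc}.
  move=> m1 m2 m1_supp m2_supp eq12; apply/mnmP => i.
  by rewrite !digitE (sum_digits_inj (digit_lt _ m1_supp) (digit_lt _ m2_supp) eq12).
pose q : {poly R} := \sum_(m <- msupp p) p@_m *: 'X^(enc m).
have q0 : q = 0.
  apply: poly_eq0_of_horner => t; rewrite -(p0 (fun i => t ^+ (D ^ i))) horner_sum mevalE.
  apply: eq_bigr => m _; rewrite hornerZ hornerXn -prodrXr; congr (_ * _).
  by apply: eq_bigr => i _; rewrite -exprM mulnC digitE.
apply/mpolyP => m; rewrite mcoeff0.
have [m_supp|] := boolP (m \in msupp p); last exact: memN_msupp_eq0.
have := congr1 (fun r : {poly R} => r`_(enc m)) q0; rewrite coef0 coef_sum => <-.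
rewrite (big_rem m m_supp) /= coefZ coefXn eqxx mulr1 big1_seq ?addr0 // => m' /andP[_].
rewrite mem_rem_uniq ?msupp_uniq // inE => /andP[m'_neq m'_supp].
rewrite coefZ coefXn; case: eqP => [/esym/(enc_inj _ _ m'_supp m_supp) eq_m|_].
  by rewrite eq_m eqxx in m'_neq.
by rewrite mulr0.
Qed.

Lemma msupp_pihomog (R : nzRingType) (k : nat) (mf : measure k) (d : nat)
    (p : {mpoly R[k]}) (m : 'X_{1..k}) :
  m \in msupp (pihomog mf d p) -> m \in msupp p.
Proof.
rewrite !mcoeff_msupp; apply: contra => /eqP p_m0.
rewrite pihomogE raddf_sum big1_seq // => m' _ /=.
by rewrite mcoeffZ mcoeffX; case: eqP => [->|]; rewrite ?p_m0 ?mul0r ?mulr0.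
Qed.

Lemma meval_pihomog_eq0 (R : numDomainType) (k : nat) (p : {mpoly R[k]})
    (v : 'I_k -> R) :
  (forall t, p.@[fun j => t * v j] = 0) -> forall d, (pihomog mdeg d p).@[v] = 0.
Proof.
move=> p_cone0 d; pose K := msize p.
pose q : {poly R} := \poly_(e < K) (pihomog mdeg e p).@[v].
have q0 : q = 0.
  apply: poly_eq0_of_horner => t; rewrite horner_poly -[in RHS](p_cone0 t).
  rewrite [in RHS](pihomog_partitionE (leqnn K)) raddf_sum; apply: eq_bigr => e _ /=.
  by rewrite (meval_dhomog_scale (pihomogP _ _ _)) mulrC.
have [dK|Kd] := ltnP d K.
  by have := congr1 (fun r : {poly R} => r`_d) q0; rewrite coef_poly dK coef0.
rewrite pihomogE big_seq_cond big_pred0 ?meval0 // => m.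
apply/negbTE/andP => -[/msize_mdeg_lt + /eqP mdeg_m].
by rewrite mdeg_m ltnNge Kd.
Qed.

Section GeneratedIdeal.
Variables (n kappa : nat).
Implicit Types (S T : CP n kappa -> Prop) (p q : CP n kappa).

Lemma gen_ideal0 S : gen_ideal S 0.
Proof. by exists [::]; rewrite big_nil. Qed.

Lemma gen_ideal_gen S q : S q -> gen_ideal S q.
Proof.
move=> Sq; exists [:: (1, q)]; rewrite big_seq1 mul1r; split=> //.
by move=> r; rewrite inE => /eqP ->.
Qed.

Lemma gen_idealD S p q : gen_ideal S p -> gen_ideal S q -> gen_ideal S (p + q).
Proof.
move=> [s [Ss ->]] [s' [Ss' ->]]; exists (s ++ s'); rewrite big_cat; split=> //.
by move=> r; rewrite mem_cat => /orP[/Ss|/Ss'].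
Qed.

Lemma gen_idealMl S a p : gen_ideal S p -> gen_ideal S (a * p).
Proof.
move=> [s [Ss ->]]; exists [seq (a * r.1, r.2) | r <- s]; split.
  by move=> q /mapP[r r_s ->]; exact: Ss r r_s.
by rewrite big_map mulr_sumr; apply: eq_bigr => q _ /=; rewrite mulrA.
Qed.

Lemma gen_ideal_sum S (I : eqType) (r : seq I) (F : I -> CP n kappa) :
  (forall i, i \in r -> gen_ideal S (F i)) -> gen_ideal S (\sum_(i <- r) F i).
Proof.
elim: r => [|i r IHr] SF; first by rewrite big_nil; exact: gen_ideal0.
rewrite big_cons; apply: gen_idealD; first exact/SF/mem_head.
by apply: IHr => j j_r; apply: SF; rewrite in_cons j_r orbT.
Qed.

Lemma gen_ideal_sub S T p :
  (forall q, S q -> gen_ideal T q) -> gen_ideal S p -> gen_ideal T p.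
Proof.
move=> ST [s [Ss ->]]; apply: gen_ideal_sum => r r_s.
exact/gen_idealMl/ST/Ss.
Qed.

Lemma hom_phylo_ideal_cone (D : Type) (psi : D -> Idx n kappa -> CC) q :
  hom_phylo_ideal psi q -> forall x t, q.@[fun j => t * psi x (enum_val j)] = 0.
Proof.
move=> [s [Ss ->]] x t; rewrite raddf_sum big1_seq // => r /andP[_ r_s].
have [[d r_homog] r_van] := Ss r r_s.
by rewrite /= mevalM (meval_dhomog_scale r_homog) [r.2.@[_]]r_van !mulr0.
Qed.

End GeneratedIdeal.

Section DiagonalVariables.
Variables (n kappa : nat).
Local Notation nv := (nvar n kappa).
Implicit Types (g : CP n kappa) (m b : 'X_{1..nv}) (j : 'I_nv).

Definition diag_var (i : 'I_kappa) : 'I_nv := enum_rank (diag_idx n i).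

Definition is_diag_var j : bool := [exists i, j == diag_var i].

Lemma is_diag_var_diag i : is_diag_var (diag_var i).
Proof. by apply/existsP; exists i. Qed.

Lemma diag_array_offdiag (pi : 'I_kappa -> CC) j :
  ~~ is_diag_var j -> diag_array pi (enum_val j) = 0.
Proof.
move=> offdiag_j; apply: big1 => i _; case: eqP => // j_diag.
by rewrite -[j]enum_valK j_diag is_diag_var_diag in offdiag_j.
Qed.

Lemma diag_array_diag (pi : 'I_kappa -> CC) i :
  (0 < n)%N -> diag_array pi (enum_val (diag_var i)) = pi i.
Proof.
move=> n_gt0; rewrite enum_rankK /diag_array (bigD1 i) //= eqxx big1 ?addr0 // => i' ne_i'.
case: eqP => // /(congr1 (fun x : Idx n kappa => x (Ordinal n_gt0))).
by rewrite !ffunE => eq_i; rewrite eq_i eqxx in ne_i'.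
Qed.

Lemma meval_CP'_eq g (v w : 'I_nv -> CC) :
  in_CP' g -> (forall j, ~~ is_diag_var j -> v j = w j) -> g.@[v] = g.@[w].
Proof.
move=> g_CP' eq_vw; rewrite !mevalE; apply: eq_big_seq => m m_supp; congr (_ * _).
apply: eq_bigr => j _; have [/existsP[i /eqP ->]|/eq_vw -> //] := boolP (is_diag_var j).
by rewrite (g_CP' m m_supp i) !expr0.
Qed.

Definition diag_mnm m : 'X_{1..nv} :=
  [multinom (if is_diag_var j then m j else 0%N) | j < nv].

Definition offdiag_mnm m : 'X_{1..nv} :=
  [multinom (if is_diag_var j then 0%N else m j) | j < nv].

Lemma diag_offdiag_mnm m : (diag_mnm m + offdiag_mnm m)%MM = m.
Proof. by apply/mnmP => j; rewrite mnmDE !mnmE; case: is_diag_var; rewrite ?addn0. Qed.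

Definition diag_coef g b : CP n kappa :=
  \sum_(m <- msupp g | diag_mnm m == b) g@_m *: 'X_[offdiag_mnm m].

Lemma diag_coef_CP' g b : in_CP' (diag_coef g b).
Proof.
move=> m + i; rewrite mcoeff_msupp; apply: contraNeq => m_diag.
apply/eqP; rewrite raddf_sum big1_seq // => m' _ /=.
rewrite mcoeffZ mcoeffX; case: eqP => [eq_m|]; last by rewrite mulr0.
by rewrite -eq_m mnmE is_diag_var_diag in m_diag.
Qed.

Lemma diag_coef_homog g d b : g \is d.-homog -> diag_coef g b \is (d - mdeg b).-homog.
Proof.
move=> /dhomogP g_homog; rewrite /diag_coef big_seq_cond.
apply: rpred_sum => m /andP[m_supp /eqP <-].
have := congr1 mdeg (diag_offdiag_mnm m); rewrite mdegD (g_homog m m_supp) => <-.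
by rewrite rpredZ // dhomogX addKn.
Qed.

Lemma diag_coef_decomposition g :
  g = \sum_(b <- undup [seq diag_mnm m | m <- msupp g]) 'X_[b] * diag_coef g b.
Proof.
rewrite {1}[g]mpolyE.
under [RHS]eq_bigr => b _ do rewrite /diag_coef mulr_sumr big_mkcond /=.
rewrite exchange_big /=; apply: eq_big_seq => m m_supp; rewrite -big_mkcond /=.
rewrite (eq_bigr (fun _ => g@_m *: 'X_[m])) => [|b /eqP <-]; last first.
  by rewrite -scalerAr -mpolyXD diag_offdiag_mnm.
rewrite big_const_seq (eq_count (a2 := pred1 (diag_mnm m))) => [|b]; last exact: eq_sym.
by rewrite count_uniq_mem ?undup_uniq // mem_undup map_f //= addr0.
Qed.

Definition specialize_offdiag g (x : 'I_nv -> CC) : CP n kappa :=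
  \sum_(m <- msupp g)
     (g@_m * \prod_j (if is_diag_var j then 1 else x j ^+ m j)) *: 'X_[diag_mnm m].

Lemma mcoeff_specialize_offdiag g x b :
  (specialize_offdiag g x)@_b = (diag_coef g b).@[x].
Proof.
rewrite !raddf_sum /= [RHS]big_mkcond /=; apply: eq_bigr => m _.
rewrite mcoeffZ mcoeffX; case: eqP => _; rewrite ?mulr1 ?mulr0 //.
rewrite mevalZ mevalX; congr (_ * _); apply: eq_bigr => j _.
by rewrite mnmE; case: is_diag_var.
Qed.

Lemma meval_specialize_offdiag g x v :
  (specialize_offdiag g x).@[v] = g.@[fun j => if is_diag_var j then v j else x j].
Proof.
rewrite raddf_sum mevalE; apply: eq_bigr => m _ /=.
rewrite mevalZ mevalX -mulrA -big_split; congr (_ * _); apply: eq_bigr => j _ /=.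
by rewrite mnmE; case: is_diag_var; rewrite ?mul1r ?expr0 ?mulr1.
Qed.

End DiagonalVariables.

Section PlusInvariableSites.
Variables (n kappa N : nat) (f : Idx n kappa -> {mpoly CC[N]}).
Local Notation phit := (poly_param f).
Local Notation nv := (nvar n kappa).

Lemma plusI_ideal_sup (q : CP n kappa) :
  hom_phylo_ideal phit q -> in_CP' q -> hom_phylo_ideal (plusI_param phit) q.
Proof.
move=> q_hom q_CP'; rewrite (pihomog_partitionE (leqnn (msize q))).
apply: gen_ideal_sum => d _; apply: gen_ideal_gen; split; first by exists d; exact: pihomogP.
have qd_CP' : in_CP' (pihomog mdeg d q) by move=> m /msupp_pihomog; exact: q_CP'.
move=> [s [[delta pi] ?]]; rewrite /evalP.
rewrite (meval_CP'_eq (w := fun j => (1 - delta) * phit s (enum_val j)) qd_CP').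
  rewrite (meval_dhomog_scale (pihomogP _ _ _)) meval_pihomog_eq0 ?mulr0 // => t.
  exact: hom_phylo_ideal_cone q_hom s t.
by move=> j offdiag_j; rewrite /plusI_param /= diag_array_offdiag // mulr0 addr0.
Qed.

Lemma plusI_param_cone (s : 'I_N -> CC) (v : 'I_nv -> CC)
    (x := fun j => phit s (enum_val j))
    (A := \sum_(i < kappa) (v (diag_var n i) - x (diag_var n i))) :
  (0 < n)%N -> A != 0 -> 1 + A != 0 ->
  exists sd, forall j,
    (if is_diag_var j then v j else x j) = (1 + A) * plusI_param phit sd (enum_val j).
Proof.
move=> n_gt0 A_neq0 A1_neq0.
pose pi i := (v (diag_var n i) - x (diag_var n i)) / A.
have pi_sum1 : \sum_(i < kappa) pi i = 1 by rewrite -mulr_suml divff.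
exists (s, exist _ (A / (1 + A), pi) pi_sum1) => j; rewrite /plusI_param /=.
have [/existsP[i /eqP ->]|offdiag_j] := boolP (is_diag_var j).
  by rewrite diag_array_diag // /pi /x; field; rewrite A_neq0 A1_neq0.
by rewrite diag_array_offdiag // /x; field; rewrite A1_neq0.
Qed.

Lemma specialize_offdiag_phit_eq0 (g : CP n kappa) (d : nat) (s : 'I_N -> CC) :
  (0 < n)%N -> (0 < kappa)%N ->
  g \is d.-homog -> vanishing_ideal (plusI_param phit) g ->
  specialize_offdiag g (fun j => phit s (enum_val j)) = 0.
Proof.
move=> n_gt0 kappa_gt0 g_homog g_van; set x := fun j => _.
pose A : CP n kappa := \sum_(i < kappa) ('X_(diag_var n i) - (x (diag_var n i))%:MP).
have AE v : A.@[v] = \sum_(i < kappa) (v (diag_var n i) - x (diag_var n i)).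
  by rewrite raddf_sum; apply: eq_bigr => i _ /=; rewrite mevalB mevalXU mevalC.
have AA1_neq0 : A * (1 + A) != 0.
  apply/eqP => /(congr1 (meval (fun j => x j + 1))); apply/eqP.
  rewrite meval0 mevalM mevalD meval1 AE.
  under eq_bigr do rewrite addrAC subrr add0r.
  by rewrite sumr_const card_ord addrC natr1 mulf_neq0 // pnatr_eq0 -lt0n.
have : specialize_offdiag g x * (A * (1 + A)) = 0.
  apply: mpoly_eq0_of_meval => v; rewrite !mevalM mevalD meval1 AE.
  set a := \sum_(i < kappa) _.
  have [->|A_neq0] := eqVneq a 0; first by rewrite !mul0r mulr0.
  have [->|A1_neq0] := eqVneq (1 + a) 0; first by rewrite !mulr0.
  have [sd sdE] := plusI_param_cone n_gt0 A_neq0 A1_neq0.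
  rewrite meval_specialize_offdiag (meval_eq _ sdE) (meval_dhomog_scale g_homog).
  by rewrite [g.@[_]]g_van !mulr0 mul0r.
by move/eqP; rewrite mulf_eq0 (negbTE AA1_neq0) orbF => /eqP.
Qed.

Lemma plusI_ideal_sub (p : CP n kappa) :
  (0 < n)%N -> (0 < kappa)%N ->
  hom_phylo_ideal (plusI_param phit) p ->
  gen_ideal (fun q => hom_phylo_ideal phit q /\ in_CP' q) p.
Proof.
move=> n_gt0 kappa_gt0; apply: gen_ideal_sub => g [[d g_homog] g_van].
rewrite (diag_coef_decomposition g); apply: gen_ideal_sum => b _.
apply/gen_idealMl/gen_ideal_gen; split; last exact: diag_coef_CP'.
apply: gen_ideal_gen; split; first by exists (d - mdeg b)%N; exact: diag_coef_homog.
move=> s; rewrite /evalP -mcoeff_specialize_offdiag.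
by rewrite (specialize_offdiag_phit_eq0 s n_gt0 kappa_gt0 g_homog g_van) mcoeff0.
Qed.

End PlusInvariableSites.

Theorem proposition9 (n kappa N : nat) (hn : (0 < n)%N) (hk : (0 < kappa)%N)
  (f : Idx n kappa -> {mpoly CC[N]}) :
  let phit := poly_param f in
  let Jt := hom_phylo_ideal phit in
  let J := hom_phylo_ideal (plusI_param phit) in
  forall p : CP n kappa, J p <-> gen_ideal (fun q => Jt q /\ in_CP' q) p.
Proof.
move=> phit Jt J p; split; first exact: plusI_ideal_sub.
by apply: gen_ideal_sub => q []; exact: plusI_ideal_sup.
Qed.
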